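(* Let $W:\{0,1\}\to\mathcal{Y}$ and $V:\{0,1\}\to\mathcal{Z}$ be two binary-input discrete memoryless channels such that $\lvert\Delta_{V}\rvert \prec_{icx} \lvert\Delta_{W}\rvert$. Then $\lvert\Delta_{V^-}\rvert \prec_{icx} \lvert\Delta_{W^-}\rvert$ and $\lvert\Delta_{V^+}\rvert \prec_{icx} \lvert\Delta_{W^+}\rvert$.
   Context: For a binary-input discrete memoryless channel (B-DMC) $W:\{0,1\}\to\mathcal{Y}$ with transition probabilities $W(y|x)$, let $q_W(y)=\tfrac12\big(W(y|0)+W(y|1)\big)$ and, for $y$ with $q_W(y)>0$, $\Delta_W(y)=\frac{W(y|0)-W(y|1)}{W(y|0)+W(y|1)}$. With $Y\sim q_W$ (uniform input), $\Delta_W$ denotes the random variable $\Delta_W(Y)\in[-1,1]$ and $\lvert\Delta_W\rvert$ its absolute value. Ar\i kan's polarization transforms synthesize from two independent copies of $W$ the channels $W^-:\{0,1\}\to\mathcal{Y}^2$ and $W^+:\{0,1\}\to\mathcal{Y}^2\times\{0,1\}$ with $W^-(y_1y_2|u_1)=\sum_{u_2\in\{0,1\}}\tfrac12 W(y_1|u_1\oplus u_2)W(y_2|u_2)$ and $W^+(y_1y_2u_1|u_2)=\tfrac12 W(y_1|u_1\oplus u_2)W(y_2|u_2)$. For real random variables $X,Y$, $X\prec_{icx}Y$ (increasing convex order) means $\mathbb{E}[\phi(X)]\le\mathbb{E}[\phi(Y)]$ for all increasing convex functions $\phi$ for which the expectations exist. *)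

From mathcomp Require Import all_boot all_order all_algebra.
From mathcomp Require Import reals.
Set Implicit Arguments. Unset Strict Implicit. Unset Printing Implicit Defensive.
Import Order.TTheory GRing.Theory Num.Theory.
Local Open Scope ring_scope.

Section BDMC.
Variable R : realType.

(* A binary-input DMC W : {0,1} -> Y, input 0 = false, 1 = true; W x y = W(y|x). *)
Definition is_channel (Y : finType) (W : bool -> Y -> R) : Prop :=
  (forall x y, 0 <= W x y) /\ (forall x, \sum_(y : Y) W x y = 1).

Definition qW (Y : finType) (W : bool -> Y -> R) (y : Y) : R :=
  (W false y + W true y) / 2.

(* Delta_W(y); only used where q_W(y) > 0 (elsewhere its weight is 0). *)
Definition DeltaW (Y : finType) (W : bool -> Y -> R) (y : Y) : R :=
  (W false y - W true y) / (W false y + W true y).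

(* E[phi(|Delta_W|)] with Y ~ q_W, restricted to the support of q_W. *)
Definition expect_absDelta (Y : finType) (W : bool -> Y -> R) (phi : R -> R) : R :=
  \sum_(y : Y | 0 < qW W y) qW W y * phi `|DeltaW W y|.

Definition increasing (phi : R -> R) : Prop := forall x y, x <= y -> phi x <= phi y.

Definition convex (phi : R -> R) : Prop :=
  forall (x y t : R), 0 <= t -> t <= 1 ->
    phi (t * x + (1 - t) * y) <= t * phi x + (1 - t) * phi y.

(* |Delta_V| <_icx |Delta_W| (all expectations are finite sums, hence exist). *)
Definition icx_absDelta (Z Y : finType) (V : bool -> Z -> R) (W : bool -> Y -> R) : Prop :=
  forall phi : R -> R, increasing phi -> convex phi ->
    expect_absDelta V phi <= expect_absDelta W phi.

Definition chan_minus (Y : finType) (W : bool -> Y -> R) : bool -> (Y * Y)%type -> R :=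
  fun u1 yy => \sum_(u2 : bool) (1 / 2) * W (addb u1 u2) yy.1 * W u2 yy.2.

Definition chan_plus (Y : finType) (W : bool -> Y -> R) : bool -> ((Y * Y) * bool)%type -> R :=
  fun u2 yyu => (1 / 2) * W (addb yyu.2 u2) yyu.1.1 * W u2 yyu.1.2.

End BDMC.

From mathcomp Require Import all_boot all_order all_algebra.
From mathcomp Require Import reals ring lra.
Set Implicit Arguments. Unset Strict Implicit. Unset Printing Implicit Defensive.
Import Order.TTheory GRing.Theory Num.Theory.
Local Open Scope ring_scope.

(** The transforms act on the pair (q_W, Delta_W) in closed form: on the output pair
    (y1, y2), Delta_{W^-} is Delta_1 Delta_2, while W^+ splits (y1, y2) into two
    outputs of weight (1 +- Delta_1 Delta_2)/2 with Delta-values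
    (Delta_1 +- Delta_2)/(1 +- Delta_1 Delta_2). Hence E phi(|Delta_{W^-}|) and
    E phi(|Delta_{W^+}|) are sums of q(y1) q(y2) K(|Delta(y1)|, |Delta(y2)|) for a
    symmetric kernel K: phi(s t) for W^-, and for W^+ the average over c = +-t of the
    perspectives (1 + s c) phi(|s + c| / (1 + s c)), which are convex in s. Swapping
    the two copies of W for copies of V one at a time proves the claim, provided
    every K(., t) is an admissible test function. For W^+ it is only convex and
    nondecreasing on [0, 1]; this suffices because on the finitely many values taken
    by |Delta| it agrees with the maximum of its supporting lines, which is convex
    and nondecreasing on the whole line. *)

Section ConvexIn.
Variable R : realType.
Implicit Types (a b : R) (f : R -> R).

Definition convex_in a b f : Prop :=
  forall x y t, a <= x <= b -> a <= y <= b -> 0 <= t <= 1 ->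
    f (t * x + (1 - t) * y) <= t * f x + (1 - t) * f y.

Lemma convex_in_chord a b f : convex_in a b f ->
  forall x p y, a <= x -> x < p -> p < y -> y <= b ->
  (y - x) * f p <= (y - p) * f x + (p - x) * f y.
Proof.
move=> f_conv x p y ax xp py yb.
have yx_gt0 : 0 < y - x by lra.
have yx_neq0 : y - x != 0 by rewrite gt_eqF.
pose t := (y - p) / (y - x).
have t01 : 0 <= t <= 1.
  by rewrite divr_ge0 ?ler_pdivrMr //=; lra.
have /(ler_wpM2l (ltW yx_gt0)) : f (t * x + (1 - t) * y) <= t * f x + (1 - t) * f y.
  by apply: f_conv => //; apply/andP; split; lra.
have -> : t * x + (1 - t) * y = p by rewrite /t; field.
suff -> : (y - x) * (t * f x + (1 - t) * f y) = (y - p) * f x + (p - x) * f y by [].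
by rewrite /t; field.
Qed.

Lemma convex_in_even_homo b f : convex_in (- b) b f -> (forall s, f (- s) = f s) ->
  forall x y, 0 <= x -> x <= y -> y <= b -> f x <= f y.
Proof.
move=> f_conv f_even x y x_ge0 xy yb.
have [y0|y_neq0] := eqVneq y 0; first by have -> : x = y by lra.
have y_gt0 : 0 < y by rewrite lt_neqAle eq_sym y_neq0; lra.
pose t := (y + x) / (2 * y).
have t01 : 0 <= t <= 1.
  by rewrite divr_ge0 ?ler_pdivrMr /=; [lra | lra | lra | lra].
have := f_conv y (- y) t _ _ t01.
rewrite f_even (_ : t * y + (1 - t) * - y = x); last by rewrite /t; field; lra.
by rewrite -mulrDl addrC subrK mul1r; apply; apply/andP; split; lra.
Qed.

Lemma convex_in_sub a b a' b' f :
  a <= a' -> b' <= b -> convex_in a b f -> convex_in a' b' f.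
Proof.
move=> aa' b'b f_conv x y t /andP[? ?] /andP[? ?]; apply: f_conv.
  by apply/andP; split; lra.
by apply/andP; split; lra.
Qed.

Lemma mulr_div_dominated (w x : R) : `|x| <= w -> w * (x / w) = x.
Proof.
have [-> | w_neq0 _] := eqVneq w 0; last by rewrite mulrC divfK.
by rewrite normr_le0 => /eqP ->; rewrite !mul0r.
Qed.

Lemma convex_perspective (phi : R -> R) : convex phi ->
  forall w1 w2 x1 x2 t, `|x1| <= w1 -> `|x2| <= w2 -> 0 <= t <= 1 ->
  (t * w1 + (1 - t) * w2) * phi ((t * x1 + (1 - t) * x2) / (t * w1 + (1 - t) * w2))
  <= t * (w1 * phi (x1 / w1)) + (1 - t) * (w2 * phi (x2 / w2)).
Proof.
move=> phi_conv w1 w2 x1 x2 t hx1 hx2 /andP[t_ge0 t_le1].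
have tw1_ge0 : 0 <= t * w1 by rewrite mulr_ge0 // (le_trans _ hx1).
have tw2_ge0 : 0 <= (1 - t) * w2 by rewrite mulr_ge0 ?subr_ge0 // (le_trans _ hx2).
rewrite !mulrA.
set w := t * w1 + (1 - t) * w2; set a1 := x1 / w1; set a2 := x2 / w2.
have [w0|w_neq0] := eqVneq w 0.
  have [-> ->] : t * w1 = 0 /\ (1 - t) * w2 = 0 by rewrite /w in w0; lra.
  by rewrite w0 !mul0r addr0.
have w_gt0 : 0 < w by rewrite lt_neqAle eq_sym w_neq0 /w; lra.
pose th := t * w1 / w.
have th01 : 0 <= th <= 1.
  by rewrite divr_ge0 ?ler_pdivrMr //= ?mul1r /w; lra.
have -> : t * x1 + (1 - t) * x2 = t * w1 * a1 + (1 - t) * w2 * a2.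
  by rewrite -!mulrA !mulr_div_dominated.
have -> : (t * w1 * a1 + (1 - t) * w2 * a2) / w = th * a1 + (1 - th) * a2.
  by rewrite /th /w; clearbody a1 a2; field.
case/andP: th01 => th_ge0 th_le1.
apply: le_trans (ler_wpM2l (ltW w_gt0) (phi_conv _ _ _ th_ge0 th_le1)) _.
suff -> : w * (th * phi a1 + (1 - th) * phi a2) = t * w1 * phi a1 + (1 - t) * w2 * phi a2
  by [].
by rewrite /th /w; field.
Qed.

End ConvexIn.

Lemma normD_le_1_mul (R : realType) (s c : R) : - 1 <= s <= 1 -> - 1 <= c <= 1 ->
  `|s + c| <= 1 + s * c.
Proof. by move=> /andP[? ?] /andP[? ?]; rewrite ler_norml; apply/andP; split; nra. Qed.

Section PlusKernel.
Variables (R : realType) (phi : R -> R).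

Definition plus_branch (c s : R) : R := (1 + s * c) * phi (`|s + c| / (1 + s * c)).

Definition plus_kernel (s t : R) : R := (plus_branch t s + plus_branch (- t) s) / 2.

Lemma plus_branchN c s : plus_branch c (- s) = plus_branch (- c) s.
Proof. by rewrite /plus_branch mulNr mulrN (addrC (- s)) distrC. Qed.

Lemma plus_kernelC s t : plus_kernel s t = plus_kernel t s.
Proof. by rewrite /plus_kernel /plus_branch !mulrN (mulrC t s) (addrC t s) (distrC t s). Qed.

Lemma plus_kernelNl s t : plus_kernel (- s) t = plus_kernel s t.
Proof. by rewrite /plus_kernel !plus_branchN opprK addrC. Qed.

Lemma plus_kernel_norm s t : plus_kernel `|s| `|t| = plus_kernel s t.
Proof.
have normK u v : plus_kernel `|u| v = plus_kernel u v.
  by have [/ger0_norm -> | /ltr0_norm ->] := lerP 0 u; rewrite ?plus_kernelNl.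
by rewrite normK plus_kernelC normK plus_kernelC.
Qed.

Hypotheses (phi_homo : increasing phi) (phi_conv : convex phi).

Lemma plus_branch_convex c : - 1 <= c <= 1 -> convex_in (- 1) 1 (plus_branch c).
Proof.
move=> c_bd s1 s2 t s1_bd s2_bd t01.
have hw1 := normD_le_1_mul s1_bd c_bd; have hw2 := normD_le_1_mul s2_bd c_bd.
have /andP[t_ge0 t_le1] := t01.
rewrite /plus_branch.
have -> : 1 + (t * s1 + (1 - t) * s2) * c = t * (1 + s1 * c) + (1 - t) * (1 + s2 * c) by ring.
rewrite -(normr_id (s1 + c)) -(normr_id (s2 + c)) in hw1 hw2.
apply: le_trans (convex_perspective phi_conv hw1 hw2 t01).
have w_ge0 : 0 <= t * (1 + s1 * c) + (1 - t) * (1 + s2 * c).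
  have w1_ge0 := le_trans (normr_ge0 _) hw1; have w2_ge0 := le_trans (normr_ge0 _) hw2.
  by rewrite addr_ge0 // mulr_ge0 ?subr_ge0.
apply/ler_wpM2l/phi_homo/ler_wpM2r; rewrite ?invr_ge0 //.
have -> : t * s1 + (1 - t) * s2 + c = t * (s1 + c) + (1 - t) * (s2 + c) by ring.
apply: le_trans (ler_normD _ _) _.
by rewrite !normrM (ger0_norm t_ge0) (@ger0_norm _ (1 - t)) ?subr_ge0.
Qed.

Lemma plus_kernel_convex t : - 1 <= t <= 1 -> convex_in (- 1) 1 (plus_kernel ^~ t).
Proof.
move=> t_bd s1 s2 l s1_bd s2_bd l01 /=.
have Nt_bd : - 1 <= - t <= 1 by case/andP: t_bd => ? ?; apply/andP; split; lra.
have h1 := plus_branch_convex t_bd s1_bd s2_bd l01.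
have h2 := plus_branch_convex Nt_bd s1_bd s2_bd l01.
rewrite /plus_kernel [X in _ <= X](_ : _ =
  ((l * plus_branch t s1 + (1 - l) * plus_branch t s2) +
   (l * plus_branch (- t) s1 + (1 - l) * plus_branch (- t) s2)) / 2); last by ring.
by rewrite ler_pM2r ?invr_gt0 // lerD.
Qed.

Lemma plus_kernel_homo t : - 1 <= t <= 1 ->
  forall x y, 0 <= x -> x <= y -> y <= 1 -> plus_kernel x t <= plus_kernel y t.
Proof.
move=> t_bd; apply: (convex_in_even_homo (plus_kernel_convex t_bd)).
by move=> s /=; rewrite plus_kernelNl.
Qed.

End PlusKernel.

Section Expectation.
Variable R : realType.

Lemma expect_absDeltaE (Y : finType) (U : bool -> Y -> R) (f : R -> R) :
  (forall y, 0 <= qW U y) ->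
  expect_absDelta U f = \sum_y qW U y * f `|DeltaW U y|.
Proof.
move=> qW_ge0; rewrite /expect_absDelta big_mkcond; apply: eq_bigr => y _.
case: ifPn => //; rewrite -leNgt => q_le0.
have -> : qW U y = 0 by apply/le_anti; rewrite q_le0 qW_ge0.
by rewrite mul0r.
Qed.

Lemma qW_scaled_absDelta (Y : finType) (U : bool -> Y -> R) (phi : R -> R) y k w x :
  U false y = k * (w + x) -> U true y = k * (w - x) -> 0 <= w ->
  qW U y * phi `|DeltaW U y| = k * (w * phi (`|x| / w)).
Proof.
move=> U0 U1 w_ge0; rewrite /qW /DeltaW U0 U1.
have [-> | k_neq0] := eqVneq k 0; first by rewrite !(mul0r, addr0).
have -> : k * (w + x) + k * (w - x) = (2 * k) * w by ring.
have -> : k * (w + x) - k * (w - x) = (2 * k) * x by ring.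
rewrite -mulf_div divff ?mulf_neq0 ?pnatr_eq0 // mul1r normf_div (ger0_norm w_ge0).
by field.
Qed.

Lemma qW_ge0 (Y : finType) (U : bool -> Y -> R) :
  (forall x y, 0 <= U x y) -> forall y, 0 <= qW U y.
Proof. by move=> U_ge0 y; rewrite divr_ge0 ?addr_ge0. Qed.

Lemma sumr_pair (I J : finType) (F : I * J -> R) :
  \sum_p F p = \sum_j \sum_i F (i, j).
Proof. by rewrite exchange_big pair_bigA; apply: eq_bigr => -[]. Qed.

Variables (Y : finType) (U : bool -> Y -> R).
Hypothesis U_ge0 : forall x y, 0 <= U x y.

Lemma DeltaW_bound y : - 1 <= DeltaW U y <= 1.
Proof.
rewrite -ler_norml /DeltaW normf_div.
have [-> | s_neq0] := eqVneq (U false y + U true y) 0; first by rewrite normr0 invr0 mulr0.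
have U0 := U_ge0 false y; have U1 := U_ge0 true y.
rewrite ler_pdivrMr ?normr_gt0 // mul1r (ger0_norm (addr_ge0 U0 U1)) ler_norml.
by apply/andP; split; lra.
Qed.

Lemma absDeltaW_bound y : 0 <= `|DeltaW U y| <= 1.
Proof. by rewrite normr_ge0 ler_norml DeltaW_bound. Qed.

Lemma qW_DeltaW_decomp y :
  U false y = qW U y * (1 + DeltaW U y) /\ U true y = qW U y * (1 - DeltaW U y).
Proof.
rewrite /qW /DeltaW.
have [s0 | s_neq0] := eqVneq (U false y + U true y) 0; last by split; field.
have U0 := U_ge0 false y; have U1 := U_ge0 true y.
have [-> ->] : U false y = 0 /\ U true y = 0 by lra.
by rewrite addr0 !mul0r.
Qed.

Lemma chan_minus_ge0 u yy : 0 <= chan_minus U u yy.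
Proof. by apply: sumr_ge0 => u2 _; rewrite !mulr_ge0 ?invr_ge0 ?ler0n ?ler01. Qed.

Lemma chan_plus_ge0 u p : 0 <= chan_plus U u p.
Proof. by rewrite /chan_plus !mulr_ge0 ?invr_ge0 ?ler0n ?ler01. Qed.

Lemma expect_absDelta_chan_minus phi :
  expect_absDelta (chan_minus U) phi =
  \sum_y2 qW U y2 * \sum_y1 qW U y1 * phi (`|DeltaW U y1| * `|DeltaW U y2|).
Proof.
rewrite expect_absDeltaE; last exact: qW_ge0 chan_minus_ge0.
rewrite sumr_pair; apply: eq_bigr => y2 _; rewrite mulr_sumr; apply: eq_bigr => y1 _.
have [a0 a1] := qW_DeltaW_decomp y1; have [b0 b1] := qW_DeltaW_decomp y2.
rewrite (@qW_scaled_absDelta _ _ _ _ (qW U y1 * qW U y2) 1 (DeltaW U y1 * DeltaW U y2));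
  last 3 first.
- by rewrite /chan_minus !big_bool /= a0 a1 b0 b1; field.
- by rewrite /chan_minus !big_bool /= a0 a1 b0 b1; field.
- exact: ler01.
by rewrite mul1r divr1 normrM; ring.
Qed.

Lemma expect_absDelta_chan_plus phi :
  expect_absDelta (chan_plus U) phi =
  \sum_y2 qW U y2 * \sum_y1 qW U y1 * plus_kernel phi `|DeltaW U y1| `|DeltaW U y2|.
Proof.
rewrite expect_absDeltaE; last exact: qW_ge0 chan_plus_ge0.
rewrite sumr_pair exchange_big sumr_pair /=; apply: eq_bigr => y2 _; rewrite mulr_sumr.
apply: eq_bigr => y1 _; rewrite plus_kernel_norm big_bool /=.
have [a0 a1] := qW_DeltaW_decomp y1; have [b0 b1] := qW_DeltaW_decomp y2.
have d1_bd := DeltaW_bound y1; have d2_bd := DeltaW_bound y2.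
have Nd2_bd : - 1 <= - DeltaW U y2 <= 1 by case/andP: d2_bd => ? ?; apply/andP; split; lra.
set k := qW U y1 * qW U y2 / 2.
rewrite (@qW_scaled_absDelta _ _ _ _ k (1 + DeltaW U y1 * - DeltaW U y2)
          (- (DeltaW U y1 + - DeltaW U y2))); last 3 first.
- by rewrite /chan_plus /= a1 b0 /k; field.
- by rewrite /chan_plus /= a0 b1 /k; field.
- exact: le_trans (normr_ge0 _) (normD_le_1_mul d1_bd Nd2_bd).
rewrite (@qW_scaled_absDelta _ _ _ _ k (1 + DeltaW U y1 * DeltaW U y2)
          (DeltaW U y1 + DeltaW U y2)); last 3 first.
- by rewrite /chan_plus /= a0 b0 /k; field.
- by rewrite /chan_plus /= a1 b1 /k; field.
- exact: le_trans (normr_ge0 _) (normD_le_1_mul d1_bd d2_bd).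
by rewrite normrN /plus_kernel /plus_branch /k; field.
Qed.

End Expectation.

Lemma sum_kernel_le (R : realType) (I J : finType) (p : I -> R) (q : J -> R)
    (a : I -> R) (b : J -> R) (A : R -> Prop) (K : R -> R -> R) :
  (forall i, 0 <= p i) -> (forall j, 0 <= q j) -> (forall i, A (a i)) -> (forall j, A (b j)) ->
  (forall s t, K s t = K t s) ->
  (forall t, A t -> \sum_i p i * K (a i) t <= \sum_j q j * K (b j) t) ->
  \sum_i2 p i2 * \sum_i1 p i1 * K (a i1) (a i2) <=
  \sum_j2 q j2 * \sum_j1 q j1 * K (b j1) (b j2).
Proof.
move=> p_ge0 q_ge0 Aa Ab K_sym K_le.
apply: le_trans (_ : \sum_i2 p i2 * \sum_j1 q j1 * K (b j1) (a i2) <= _).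
  by apply: ler_sum => i2 _; rewrite ler_wpM2l ?K_le.
under eq_bigr do rewrite mulr_sumr.
rewrite exchange_big /=; apply: ler_sum => j1 _.
under eq_bigr do rewrite mulrCA K_sym.
by rewrite -mulr_sumr ler_wpM2l ?K_le.
Qed.

Section SupportHull.
Variables (R : realType) (f : R -> R) (S : seq R).

Definition chord_slope (x y : R) : R := (f y - f x) / (y - x).

(* By the three-chord inequality this lies below the slope of every chord of [f]
   on [S] starting at [p], which makes [support_line p] a supporting line. *)
Definition left_slope (p : R) : R := \big[Order.max/0]_(x <- S | x < p) chord_slope x p.

Definition support_line (p x : R) : R := f p + left_slope p * (x - p).

(* The default line is itself increasing and affine, so it spoils neither
   monotonicity nor convexity. *)
Definition support_hull (x : R) : R :=
  \big[Order.max/support_line (head 0 S) x]_(p <- S) support_line p x.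

Lemma left_slope_ge0 p : 0 <= left_slope p.
Proof. exact: bigmax_ge_id. Qed.

Lemma support_hull_increasing : increasing support_hull.
Proof.
move=> x y xy; apply: (big_ind2 (fun u v => u <= v)) => [||p _].
- by rewrite lerD2l ler_wpM2l ?left_slope_ge0 ?lerD2r.
- by move=> ? ? ? ? ? ?; exact: le_max2.
by rewrite lerD2l ler_wpM2l ?left_slope_ge0 ?lerD2r.
Qed.

Lemma support_hull_convex : convex support_hull.
Proof.
move=> x y t t_ge0 t_le1.
have lineE p : support_line p (t * x + (1 - t) * y) =
    t * support_line p x + (1 - t) * support_line p y by rewrite /support_line; ring.
have line_le p : p \in head 0 S :: S ->
    support_line p (t * x + (1 - t) * y) <= t * support_hull x + (1 - t) * support_hull y.
  rewrite inE lineE => pS; apply: lerD; apply: ler_wpM2l; rewrite ?subr_ge0 // /support_hull;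
    by case/predU1P: pS => [-> | pS];
      [exact: bigmax_ge_id | exact: (le_bigmax_seq _ _ xpredT _ pS)].
rewrite {1}/support_hull big_seq; apply: bigmax_le => [|p pS]; apply: line_le.
  exact: mem_head.
by rewrite inE pS orbT.
Qed.

Hypothesis f_homo : {in S &, forall x y, x <= y -> f x <= f y}.
Hypothesis f_chord : forall x p y, x \in S -> p \in S -> y \in S -> x < p -> p < y ->
  (y - x) * f p <= (y - p) * f x + (p - x) * f y.

Lemma chord_slope_le x p y : x \in S -> p \in S -> y \in S -> x < p -> p < y ->
  chord_slope x p <= chord_slope p y.
Proof.
move=> xS pS yS xp py; have := f_chord xS pS yS xp py.
by rewrite /chord_slope ler_pdivrMr ?subr_gt0 // mulrAC ler_pdivlMr ?subr_gt0 //; lra.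
Qed.

Lemma support_line_le p x : p \in S -> x \in S -> support_line p x <= f x.
Proof.
move=> pS xS; rewrite /support_line -lerBrDl.
have [xp | px | ->] := ltgtP x p; last by rewrite !subrr mulr0.
- have -> : f x - f p = chord_slope x p * (x - p).
    by rewrite /chord_slope; field; rewrite subr_eq0 gt_eqF.
  rewrite ler_wnM2r ?subr_le0 ?(ltW xp) //.
  by rewrite /left_slope big_seq_cond; apply: (le_bigmax_seq _ _ _ _ xS); rewrite /= xS.
- have -> : f x - f p = chord_slope p x * (x - p).
    by rewrite /chord_slope; field; rewrite subr_eq0 gt_eqF.
  rewrite ler_wpM2r ?subr_ge0 ?(ltW px) //.
  rewrite /left_slope big_seq_cond; apply: bigmax_le => [|y /andP[yS yp]].
    by rewrite /chord_slope divr_ge0 ?subr_ge0 ?f_homo ?ltW.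
  exact: chord_slope_le.
Qed.

Lemma support_hull_eq x : x \in S -> support_hull x = f x.
Proof.
move=> xS; apply/le_anti/andP; split.
  rewrite /support_hull big_seq; apply: bigmax_le => [|p pS]; last exact: support_line_le.
  by apply: support_line_le => //; move: xS; case: (S) => // a s _; exact: mem_head.
have -> : f x = support_line x x by rewrite /support_line subrr mulr0 addr0.
exact: (le_bigmax_seq _ _ xpredT (support_line^~ x) xS).
Qed.

End SupportHull.

Section Icx.
Variables (R : realType) (Y Z : finType) (W : bool -> Y -> R) (V : bool -> Z -> R).
Hypotheses (W_ge0 : forall x y, 0 <= W x y) (V_ge0 : forall x z, 0 <= V x z).
Hypothesis VW : icx_absDelta V W.

Lemma icx_absDelta_convex_in (f : R -> R) : convex_in 0 1 f ->
  (forall x y, 0 <= x -> x <= y -> y <= 1 -> f x <= f y) ->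
  expect_absDelta V f <= expect_absDelta W f.
Proof.
move=> f_conv f_homo.
pose S := [seq `|DeltaW V z| | z <- enum Z] ++ [seq `|DeltaW W y| | y <- enum Y].
have S_bd x : x \in S -> 0 <= x <= 1.
  by rewrite mem_cat => /orP[] /mapP[u _ ->]; apply: absDeltaW_bound.
have hull_eq x : x \in S -> support_hull f S x = f x.
  apply: support_hull_eq => [u v uS vS uv | u p v uS pS vS up pv].
    by case/andP: (S_bd u uS) => ? _; case/andP: (S_bd v vS) => _ ?; apply: f_homo.
  case/andP: (S_bd u uS) => ? _; case/andP: (S_bd v vS) => _ ?.
  exact: convex_in_chord f_conv _ _ _ _ up pv _.
have -> : expect_absDelta V f = expect_absDelta V (support_hull f S).
  apply: eq_bigr => z _.
  by rewrite hull_eq // mem_cat (map_f (fun u => `|DeltaW V u|)) ?mem_enum.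
have -> : expect_absDelta W f = expect_absDelta W (support_hull f S).
  apply: eq_bigr => y _.
  by rewrite hull_eq // mem_cat (map_f (fun u => `|DeltaW W u|)) ?mem_enum ?orbT.
exact: VW (support_hull_increasing _ _) (support_hull_convex _ _).
Qed.

Lemma icx_absDelta_chan_minus : icx_absDelta (chan_minus V) (chan_minus W).
Proof.
move=> phi phi_homo phi_conv; rewrite !expect_absDelta_chan_minus //.
apply: (sum_kernel_le (A := fun t => 0 <= t <= 1) (K := fun s t => phi (s * t))).
- exact: qW_ge0.
- exact: qW_ge0.
- exact: absDeltaW_bound.
- exact: absDeltaW_bound.
- by move=> s t; rewrite mulrC.
move=> t /andP[t_ge0 _]; have := @VW (fun s => phi (s * t)).
rewrite !expect_absDeltaE; [apply | exact: qW_ge0 ..].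
- by move=> x y xy; apply: phi_homo; rewrite ler_wpM2r.
- by move=> x y l l_ge0 l_le1; rewrite mulrDl -!mulrA; exact: phi_conv.
Qed.

Lemma icx_absDelta_chan_plus : icx_absDelta (chan_plus V) (chan_plus W).
Proof.
move=> phi phi_homo phi_conv; rewrite !expect_absDelta_chan_plus //.
apply: (sum_kernel_le (A := fun t => 0 <= t <= 1) (K := plus_kernel phi)).
- exact: qW_ge0.
- exact: qW_ge0.
- exact: absDeltaW_bound.
- exact: absDeltaW_bound.
- exact: plus_kernelC.
move=> t t01; have t_bd : - 1 <= t <= 1 by case/andP: t01 => ? ?; apply/andP; split; lra.
have := icx_absDelta_convex_in (f := plus_kernel phi ^~ t).
rewrite !expect_absDeltaE; [apply | exact: qW_ge0 ..].
- by apply: (convex_in_sub _ _ (plus_kernel_convex phi_homo phi_conv t_bd)); lra.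
- exact: plus_kernel_homo.
Qed.

End Icx.

Theorem theorem1 (R : realType) (Y Z : finType)
    (W : bool -> Y -> R) (V : bool -> Z -> R) :
  is_channel W -> is_channel V ->
  icx_absDelta V W ->
  icx_absDelta (chan_minus V) (chan_minus W) /\
  icx_absDelta (chan_plus V) (chan_plus W).
Proof.
move=> [W_ge0 _] [V_ge0 _] VW.
by split; [exact: icx_absDelta_chan_minus | exact: icx_absDelta_chan_plus].
Qed.
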